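(* There exist $\varepsilon_0>0$ and $n_0$ such that for every $\varepsilon\in(0,\varepsilon_0]$ and $n\ge n_0$ the following holds. Let $\hat G$ be an $\varepsilon$-superextremal two-clique on $n$ vertices with partition $V(\hat G)=A\uplus B$, and let $Z=\{f,f'\}$ where $f,f'$ are vertex-disjoint edges between $A$ and $B$, such that the set of edges of $\hat G$ between $A$ and $B$ is exactly $Z$. Let $\vec H$ be a directed Hamilton cycle of $\hat G$. Then for every $e\in E(H)\setminus Z$ there are at least $n^2/300$ pairs $(e',i)$ with $e'\in E(\hat G)\setminus E(H)$ and $i\in\{1,2\}$ such that the switching $s_i(\vec H;e,e')$ is admissible (with respect to $\hat G$).
   Context: $d(v,X)$ is the number of neighbours of $v$ in $X$. A graph on $n$ vertices is an $\varepsilon$-superextremal two-clique with partition $A\uplus B$ if: (A1) $||A|-|B||\le\varepsilon n$; (A2) $d(a,A)\ge(1/2-\varepsilon)n$ for all but at most $\varepsilon n$ vertices $a\in A$; (A3) $d(a,A)\ge(1/4-\varepsilon)n$ for all $a\in A$; (A4) $d(b,B)\ge(1/2-\varepsilon)n$ for all but at most $\varepsilon n$ vertices $b\in B$; (A5) $d(b,B)\ge(1/4-\varepsilon)n$ for all $b\in B$. A directed Hamilton cycle $\vec H$ is a Hamilton cycle $H$ with a cyclic orientation; its successor function $\pi$ sends $x$ to the head of the arc leaving $x$. For $e=x\pi(x)\in E(H)$ and $e'=x'y'\notin E(H)$ with endpoints labelled so that $x$ lies on the directed path of $\vec H$ from $y'$ to $x'$, let $H_1=(H-\{e,x'\pi(x'),\pi^{-1}(y')y'\})+\{e',x\pi(x'),\pi^{-1}(y')\pi(x)\}$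 and $H_2=(H-\{e,x'\pi(x'),\pi^{-1}(y')y'\})+\{e',x\pi^{-1}(y'),\pi(x)\pi(x')\}$; $s_i(\vec H;e,e')$ is $H_i$ oriented to contain the arc $(x',y')$. It is admissible (with respect to a graph $G$) if $H_i\subseteq G$. *)

From HB Require Import structures.
From mathcomp Require Import all_boot all_order all_algebra all_fingroup.
Set Implicit Arguments. Unset Strict Implicit. Unset Printing Implicit Defensive.
Import Order.TTheory GRing.Theory Num.Theory.

Section Defs.
Variable T : finType.

Definition simple_graph (adj : rel T) : Prop :=
  symmetric adj /\ irreflexive adj.

Definition deg (adj : rel T) (v : T) (X : {set T}) : nat :=
  #|[set u in X | adj v u]|.

Local Open Scope ring_scope.

Definition superextremal_two_clique (R : realFieldType) (eps : R)
    (adj : rel T) (A B : {set T}) : Prop :=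
  let n := #|T| in
  [/\ [disjoint A & B], A :|: B = [set: T] &
   [/\ `|(#|A|%:R - #|B|%:R : R)| <= eps * n%:R,
      (#|[set a in A | (deg adj a A)%:R < (2^-1 - eps) * n%:R]|%:R : R)
          <= eps * n%:R,
      (forall a, a \in A -> (4^-1 - eps) * n%:R <= (deg adj a A)%:R :> R),
      (#|[set b in B | (deg adj b B)%:R < (2^-1 - eps) * n%:R]|%:R : R)
          <= eps * n%:R
    & (forall b, b \in B -> (4^-1 - eps) * n%:R <= (deg adj b B)%:R :> R)]].

(* A directed Hamilton cycle, given by its successor permutation pi:
   pi has a single orbit (all of T) and every arc x -> pi x is an edge. *)
Definition directed_ham_cycle (adj : rel T) (pi : {perm T}) : Prop :=
  (forall x y, fconnect pi x y) /\ (forall x, adj x (pi x)).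

Definition upair (a b u v : T) : bool :=
  ((u == a) && (v == b)) || ((u == b) && (v == a)).

Definition edgeH (pi : {perm T}) (u v : T) : bool :=
  (pi u == v) || (pi v == u).

(* x lies on the directed path of H from y' to x' (endpoints included) *)
Definition on_path (pi : {perm T}) (y' x' x : T) : bool :=
  (findex pi y' x <= findex pi y' x')%N.

(* Edge sets of H_1 (i = false) and H_2 (i = true) for e = x pi(x),
   e' = x'y'. *)
Definition switched_edge (pi : {perm T}) (i : bool) (x x' y' : T)
    (u v : T) : bool :=
  let removed := [|| upair x (pi x) u v, upair x' (pi x') u v
                   | upair ((pi^-1)%g y') y' u v] in
  let added :=
    if ~~ i then [|| upair x' y' u v, upair x (pi x') u v
                   | upair ((pi^-1)%g y') (pi x) u v]
    else [|| upair x' y' u v, upair x ((pi^-1)%g y') u v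
           | upair (pi x) (pi x') u v] in
  (edgeH pi u v && ~~ removed) || added.

Definition admissible (adj : rel T) (pi : {perm T}) (i : bool)
    (x x' y' : T) : bool :=
  [forall u, forall v, switched_edge pi i x x' y' u v ==> adj u v].

End Defs.

(* The edge e = x pi(x) lies inside one clique X, since the only edges between the
   cliques are those of Z.  Call u a usable neighbour of y in {x, pi(x)} if u is a
   neighbour of y in X whose two cycle neighbours lie in X and have degree at least
   (1/2 - eps) n there, and u is not one of the three vertices ending at x.  Minimum
   degree (1/4 - eps) n and the scarcity of low-degree vertices give about n/4 usable
   neighbours of each of x and pi(x).  A vertex of degree (1/2 - eps) n in X misses
   only O(eps n) vertices of X, so for a usable u of x almost every usable v of pi(x)
   satisfies pi^-1(u) ~ pi(v) and pi^-1(v) ~ pi(u); such a pair yields an admissible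
   switching whose new edges are x u, pi(x) v and the chord pi^-1(u) pi(v) or
   pi^-1(v) pi(u), and distinct pairs yield distinct switchings. *)

From HB Require Import structures.
From mathcomp Require Import all_boot all_order all_algebra all_fingroup.
From mathcomp Require Import zify lra.
Import Order.TTheory GRing.Theory Num.Theory.
Set Implicit Arguments. Unset Strict Implicit. Unset Printing Implicit Defensive.

Section CyclicPermutation.
Variables (T : finType) (pi : {perm T}).
Hypothesis pi_cyclic : forall x y, fconnect pi x y.

Lemma order_cyclic x : fingraph.order pi x = #|T|.
Proof. by apply: eq_card => y; rewrite !inE pi_cyclic. Qed.

Lemma findex_cyclic_lt x y : findex pi x y < #|T|.
Proof. by rewrite -(order_cyclic x) findex_max. Qed.

Lemma iter_cyclic_mod k x : iter k pi x = iter (k %% #|T|) pi x.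
Proof.
rewrite {1}(divn_eq k #|T|) addnC iterD; congr (iter _ _ _).
elim: (k %/ #|T|) => [|q IHq] //.
by rewrite mulSn iterD IHq -{1}(order_cyclic x) fingraph.iter_order //; apply: perm_inj.
Qed.

Lemma findex_cyclic_shift x y z :
  findex pi y z = (findex pi x z + #|T| - findex pi x y) %% #|T|.
Proof.
have n_gt0 : 0 < #|T| by rewrite -(order_cyclic x) fingraph.order_gt0.
have xy_lt := findex_cyclic_lt x y.
set k := (_ %% _).
rewrite -{1}(iter_findex (pi_cyclic x z)) -{1}(iter_findex (pi_cyclic x y)).
have -> : iter (findex pi x z) pi x = iter k pi (iter (findex pi x y) pi x).
  rewrite -iterD (iter_cyclic_mod (k + _)) [LHS]iter_cyclic_mod /k modnDml subnK ?modnDr //.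
  exact: leq_trans (ltnW xy_lt) (leq_addl _ _).
by rewrite findex_iter // order_cyclic ltn_mod.
Qed.

Lemma findex_cyclic_succ x y : pi y != x -> findex pi x (pi y) = (findex pi x y).+1.
Proof.
move=> piy_x; have y_lt := findex_cyclic_lt x y.
have piyE : pi y = iter (findex pi x y).+1 pi x by rewrite /= iter_findex.
rewrite piyE findex_iter ?order_cyclic // ltn_neqAle y_lt andbT.
apply: contra piy_x => /eqP n_eq.
by rewrite piyE n_eq -(order_cyclic x) fingraph.iter_order //; apply: perm_inj.
Qed.

(* If a comes no later than b on the cycle started at x, the chord from the
   predecessor of a to the successor of b skips over x. *)
Lemma chord_around_start x a b :
  a != x -> pi b != x -> pi (pi b) != x -> findex pi x a <= findex pi x b ->
  ~~ edgeH pi ((pi^-1)%g a) (pi b) && on_path pi (pi b) ((pi^-1)%g a) x.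
Proof.
move=> a_x pib_x pipib_x ab_le.
have a_gt0 : 0 < findex pi x a by rewrite lt0n findex_eq0 eq_sym.
have pib_idx := findex_cyclic_succ pib_x.
have pipib_idx := findex_cyclic_succ pipib_x.
have pred_idx := @findex_cyclic_succ x ((pi^-1)%g a); rewrite permKV in pred_idx.
have := findex_cyclic_lt x (pi (pi b)); have := findex_cyclic_lt x ((pi^-1)%g a).
rewrite /edgeH /on_path permKV !(findex_cyclic_shift x (pi b)) findex0.
move: (pred_idx a_x) => {}pred_idx pred_lt pipib_lt.
apply/andP; split.
  by apply/negP => /orP[] /eqP /(congr1 (findex pi x)); lia.
by rewrite pib_idx !modn_small; lia.
Qed.

End CyclicPermutation.

Section Admissibility.
Variables (T : finType) (adj : rel T).
Hypothesis adj_sym : symmetric adj.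

Lemma upair_adj a b u v : adj a b -> upair a b u v -> adj u v.
Proof. by move=> ab /orP[] /andP[/eqP-> /eqP->]; rewrite // adj_sym. Qed.

Lemma admissible_of_edges (pi : {perm T}) (i : bool) x x' y' :
  (forall z, adj z (pi z)) -> adj x' y' ->
  (if i then adj x ((pi^-1)%g y') && adj (pi x) (pi x')
   else adj x (pi x') && adj ((pi^-1)%g y') (pi x)) ->
  admissible adj pi i x x' y'.
Proof.
move=> pi_edges x'y' new_edges; apply/forallP => u; apply/forallP => v; apply/implyP.
case/orP => [/andP[/orP[] /eqP <- _] | ]; first exact: pi_edges.
  by rewrite adj_sym.
by case: i new_edges => /andP[e1 e2] /or3P[] /upair_adj; apply.
Qed.

End Admissibility.

Lemma upairC (T : finType) (a b u v : T) : upair b a u v = upair a b u v.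
Proof. exact: orbC. Qed.

Definition admissible_switchings {T : finType} (adj : rel T) (pi : {perm T}) (x : T) :=
  [set t : T * T * bool | let: (x', y', i) := t in
     [&& adj x' y', ~~ edgeH pi x' y', on_path pi y' x' x & admissible adj pi i x x' y']].


Lemma card_dep_pairs (T : finType) (U : {set T}) (V : T -> {set T}) :
  #|[set p : T * T | (p.1 \in U) && (p.2 \in V p.1)]| = \sum_(u in U) #|V u|.
Proof.
rewrite -sum1_card (partition_big fst (mem U)) => [|[u v]]; last by rewrite inE => /andP[].
apply: eq_bigr => u uU; rewrite -sum1_card.
rewrite (reindex_onto (pair u) snd) => [|[u' v]]; last by rewrite inE => /andP[_ /eqP <-].
by apply: eq_bigl => v; rewrite !inE /= [u \in U]uU !eqxx !andbT.
Qed.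

Section SwitchingCount.
Variables (T : finType) (adj : rel T) (pi : {perm T}) (X : {set T}) (c1 c2 x : T).
Hypothesis adj_sym : symmetric adj.
Hypothesis pi_edges : forall z, adj z (pi z).
Hypothesis pi_cyclic : forall y z, fconnect pi y z.
Hypothesis x_in : x \in X.
Hypothesis pix_in : pi x \in X.
Hypothesis cross_edges :
  forall u w, u \in X -> w \notin X -> adj u w -> u \in [set c1; c2].
(* Conditions (A1)-(A5) on the clique X, weakened to eps = 1/1000. *)
Hypothesis deg_min : forall a, a \in X -> 249 * #|T| <= 1000 * deg adj a X.
Hypothesis X_small : 2000 * #|X| <= 1001 * #|T|.
Hypothesis n_large : 10 ^ 4 <= #|T|.

Definition rich := [set a in X | 499 * #|T| <= 1000 * deg adj a X].
Hypothesis few_poor : 1000 * #|X :\: rich| <= #|T|.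

Definition near_start := [set x; (pi^-1)%g x; (pi^-1)%g ((pi^-1)%g x)].
Definition usable y u :=
  [&& u \in X, adj y u, pi u \in rich, (pi^-1)%g u \in rich & u \notin near_start].
Definition linked u v := adj ((pi^-1)%g u) (pi v) && adj ((pi^-1)%g v) (pi u).
Definition usable_x := [set u | usable x u].
Definition usable_px := [set v | usable (pi x) v].
Definition linked_to u := [set v in usable_px | linked u v].
Definition linked_pairs := [set p : T * T | (p.1 \in usable_x) && (p.2 \in linked_to p.1)].

(* If u comes before v (counting from x), s_1 with e' = pi^-1(u) pi(v) adds the edges
   x u and v pi(x); otherwise s_2 with e' = pi^-1(v) pi(u) adds x u and pi(x) v. *)
Definition switch_of_pair (p : T * T) : T * T * bool :=
  if findex pi x p.1 <= findex pi x p.2 then ((pi^-1)%g p.1, pi p.2, false)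
  else ((pi^-1)%g p.2, pi p.1, true).

Lemma not_near_start z :
  z \notin near_start -> [/\ z != x, pi z != x & pi (pi z) != x].
Proof.
rewrite !inE !negb_or => /andP[/andP[z_x z_px] z_ppx]; split => //.
  by apply: contra z_px => /eqP <-; rewrite permK.
by apply: contra z_ppx => /eqP <-; rewrite !permK.
Qed.

Lemma linked_pairs_card_le : #|linked_pairs| <= #|admissible_switchings adj pi x|.
Proof.
have switch_inj : {in linked_pairs &, injective switch_of_pair}.
  move=> [u1 v1] [u2 v2] _ _; rewrite /switch_of_pair /=.
  by case: ifP; case: ifP => // _ _ [] /perm_inj -> /perm_inj ->.
rewrite -(card_in_imset switch_inj); apply/subset_leq_card/subsetP => t.
case/imsetP => -[u v]; rewrite !inE /= /usable /linked.
case/and3P=> /and5P[_ xu _ _ /not_near_start[u_x pu_x ppu_x]].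
case/and5P=> _ pxv _ _ /not_near_start[v_x pv_x ppv_x] /andP[uv vu] ->.
rewrite /switch_of_pair /=; case: leqP => [le_uv | /ltnW le_vu].
  have /andP[-> ->] := chord_around_start pi_cyclic u_x pv_x ppv_x le_uv.
  by rewrite uv admissible_of_edges //= permKV permK xu adj_sym.
have /andP[-> ->] := chord_around_start pi_cyclic v_x pu_x ppu_x le_vu.
by rewrite vu admissible_of_edges //= permKV permK xu.
Qed.

Lemma rich_nonadj_card w : w \in rich -> 2000 * #|[set z in X | ~~ adj w z]| <= 3 * #|T|.
Proof.
rewrite inE => /andP[wX w_deg].
have := cardsID [set z | adj w z] X.
have -> : X :&: [set z | adj w z] = [set u in X | adj w u] by apply/setP => z; rewrite !inE.
have -> : X :\: [set z | adj w z] = [set z in X | ~~ adj w z].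
  by apply/setP => z; rewrite !inE andbC.
rewrite -/(deg adj w X); lia.
Qed.

Lemma linked_to_card_ge u :
  u \in usable_x -> 1000 * #|usable_px| <= 1000 * #|linked_to u| + 3 * #|T|.
Proof.
rewrite inE => /and5P[_ _ pu_rich pred_rich _].
set N1 := [set z in X | ~~ adj ((pi^-1)%g u) z].
set N2 := [set z in X | ~~ adj (pi u) z].
have N1_small : 2000 * #|N1| <= 3 * #|T| := rich_nonadj_card pred_rich.
have N2_small : 2000 * #|N2| <= 3 * #|T| := rich_nonadj_card pu_rich.
have cover : usable_px \subset linked_to u :|: (pi @^-1: N1) :|: ((pi^-1)%g @^-1: N2).
  apply/subsetP => v; rewrite [v \in usable_px]inE => vV.
  have /and5P[_ _ pv_rich pred_v_rich _] := vV.
  move: pv_rich pred_v_rich; rewrite !inE => /andP[pv_in _] /andP[pred_v_in _].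
  rewrite vV pv_in pred_v_in /linked [adj _ (pi u)]adj_sym /=.
  by case: (adj _ (pi v)); case: (adj (pi u) _).
have := subset_leq_card cover.
have := (leq_card_setU (linked_to u :|: (pi @^-1: N1)) ((pi^-1)%g @^-1: N2)).1.
have := (leq_card_setU (linked_to u) (pi @^-1: N1)).1.
rewrite !card_preimset; try exact: perm_inj.
lia.
Qed.

Lemma linked_pairs_card_ge :
  1000 * (#|usable_x| * #|usable_px|) <= 1000 * #|linked_pairs| + 3 * #|T| * #|usable_x|.
Proof.
have -> : 1000 * #|linked_pairs| + 3 * #|T| * #|usable_x|
          = \sum_(u in usable_x) (1000 * #|linked_to u| + 3 * #|T|).
  by rewrite big_split sum_nat_const /linked_pairs card_dep_pairs bigop.big_distrr mulnC.
rewrite mulnCA -sum_nat_const; apply: leq_sum => u; exact: linked_to_card_ge.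
Qed.

Lemma usable_card_ge y : deg adj y X <= #|[set u | usable y u]| + 2 * #|X :\: rich| + 5.
Proof.
set S := [set u | usable y u].
set P1 := pi @^-1: (X :\: rich); set P2 := (pi^-1)%g @^-1: (X :\: rich).
have cover : [set u in X | adj y u] \subset S :|: P1 :|: P2 :|: [set c1; c2] :|: near_start.
  apply/subsetP => u; rewrite inE => /andP[uX yu].
  have u_pu : adj u (pi u) := pi_edges u.
  have u_pred : adj u ((pi^-1)%g u) by rewrite adj_sym -{2}(permKV pi u).
  rewrite 4!in_setU [u \in S]inE /usable uX yu [u \in P1]inE [u \in P2]inE !in_setD.
  case: (boolP (pi u \in X)) => [_ | /(cross_edges uX)/(_ u_pu) ->]; last first.
    by rewrite !orbT.
  case: (boolP ((pi^-1)%g u \in X)) => [_ | /(cross_edges uX)/(_ u_pred) ->]; last first.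
    by rewrite !orbT.
  rewrite !andbT /=.
  by case: (pi u \in rich); case: (_ \in rich); case: (u \in near_start); rewrite ?orbT.
have near_small : #|near_start| <= 3.
  by apply: leq_trans (leq_card_setU _ _).1 _; rewrite cards1 cards2; case: (_ != _).
have ends_small : #|[set c1; c2]| <= 2 by rewrite cards2; case: (_ != _).
have := subset_leq_card cover.
have := (leq_card_setU (S :|: P1 :|: P2 :|: [set c1; c2]) near_start).1.
have := (leq_card_setU (S :|: P1 :|: P2) [set c1; c2]).1.
have := (leq_card_setU (S :|: P1) P2).1.
have := (leq_card_setU S P1).1.
rewrite !card_preimset; try exact: perm_inj.
rewrite -/(deg adj y X); lia.
Qed.

(* Both candidate sets have size about n/4 and every u is linked to all but 3n/1000
   candidates v, which leaves far more than n^2/300 switchings. *)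
Lemma admissible_switchings_card_ge : #|T| ^ 2 <= 300 * #|admissible_switchings adj pi x|.
Proof.
have := usable_card_ge x; have := usable_card_ge (pi x).
have := deg_min x_in; have := deg_min pix_in.
have := linked_pairs_card_ge; have := linked_pairs_card_le.
have := max_card usable_x.
set a := #|usable_x|; set b := #|usable_px|; set n := #|T|.
move=> a_le DS_le D_ge dpx dx b_ge a_ge.
have a_large : 246 * n <= 1000 * a by lia.
have b_large : 246 * n <= 1000 * b by lia.
have : (246 * n) * (246 * n) <= (1000 * a) * (1000 * b) by apply: leq_mul.
have : n * a <= n * n by rewrite leq_mul2l a_le orbT.
rewrite -mulnn; lia.
Qed.

End SwitchingCount.

Local Open Scope ring_scope.

Section EpsilonBounds.
Variables (R : realFieldType) (eps : R) (n : nat).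
Hypothesis eps_small : eps <= 1000^-1.

Lemma eps_mul_le : eps * n%:R <= n%:R / 1000.
Proof. by rewrite mulrC ler_wpM2l. Qed.

Lemma quarter_deg_bound d : (4^-1 - eps) * n%:R <= d%:R -> (249 * n <= 1000 * d)%N.
Proof. by move=> d_ge; have := eps_mul_le; rewrite -(ler_nat R) !natrM; lra. Qed.

Lemma half_deg_bound d : (1000 * d < 499 * n)%N -> d%:R < (2^-1 - eps) * n%:R.
Proof. by rewrite -(ltr_nat R) !natrM => d_lt; have := eps_mul_le; lra. Qed.

Lemma eps_card_bound c : c%:R <= eps * n%:R -> (1000 * c <= n)%N.
Proof. by move=> c_le; have := eps_mul_le; rewrite -(ler_nat R) natrM; lra. Qed.

Lemma balanced_part_bound a b : (a + b)%N = n ->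
  `|a%:R - b%:R| <= eps * n%:R -> (2000 * a <= 1001 * n)%N.
Proof.
move=> ab_n; rewrite ler_norml => /andP[_ ab_le].
by have := eps_mul_le; rewrite -(ler_nat R) !natrM -ab_n natrD in ab_le *; lra.
Qed.

End EpsilonBounds.

Lemma part_switchings_card_ge (R : realFieldType) (eps : R) (T : finType) (adj : rel T)
    (A B : {set T}) (c1 d1 c2 d2 : T) (pi : {perm T}) (x : T) :
  eps <= 1000^-1 -> (10 ^ 4 <= #|T|)%N -> symmetric adj ->
  [disjoint A & B] -> A :|: B = [set: T] ->
  `|#|A|%:R - #|B|%:R| <= eps * #|T|%:R ->
  #|[set a in A | (deg adj a A)%:R < (2^-1 - eps) * #|T|%:R]|%:R <= eps * #|T|%:R ->
  (forall a, a \in A -> (4^-1 - eps) * #|T|%:R <= (deg adj a A)%:R) ->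
  (forall a b, a \in A -> b \in B -> adj a b ->
     ((a == c1) && (b == d1)) || ((a == c2) && (b == d2))) ->
  directed_ham_cycle adj pi -> x \in A ->
  ~~ upair c1 d1 x (pi x) -> ~~ upair c2 d2 x (pi x) ->
  (#|T| ^ 2 <= 300 * #|admissible_switchings adj pi x|)%N.
Proof.
move=> eps_small n_large adj_sym AB_disj AB_cover AB_bal A_poor A_deg AB_adj.
move=> [pi_cyclic pi_edges] xA not_cd1 not_cd2.
have notA_B z : z \notin A -> z \in B.
  move=> zA; have : z \in A :|: B by rewrite AB_cover inE.
  by rewrite inE (negbTE zA).
have AB_card : (#|A| + #|B|)%N = #|T|.
  by rewrite -cardsT -AB_cover cardsU (disjoint_setI0 AB_disj) cards0 subn0.
apply: (admissible_switchings_card_ge (X := A) (c1 := c1) (c2 := c2)) => //.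
- apply: contraR not_cd1 => /notA_B pixB; move: not_cd2.
  by case/orP: (AB_adj _ _ xA pixB (pi_edges x)) => /andP[/eqP-> /eqP->];
     rewrite /upair !eqxx.
- move=> u w uA /notA_B wB /(AB_adj _ _ uA wB).
  by rewrite !inE => /orP[] /andP[-> _]; rewrite ?orbT.
- by move=> a /A_deg; apply: quarter_deg_bound.
- exact: balanced_part_bound AB_card AB_bal.
- apply: (eps_card_bound eps_small); apply: le_trans A_poor; rewrite ler_nat.
  apply/subset_leq_card/subsetP => a; rewrite !inE.
  by case: (a \in A); rewrite /= -?ltnNge ?andbT //; apply: half_deg_bound.
Qed.

Theorem mainTheorem9 (R : realFieldType) :
  exists (eps0 : R) (n0 : nat), 0 < eps0 /\
  forall (eps : R) (T : finType) (adj : rel T) (A B : {set T})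
         (a1 b1 a2 b2 : T) (pi : {perm T}) (x : T),
    0 < eps -> eps <= eps0 -> (n0 <= #|T|)%N ->
    simple_graph adj ->
    superextremal_two_clique eps adj A B ->
    a1 \in A -> a2 \in A -> b1 \in B -> b2 \in B ->
    a1 != a2 -> b1 != b2 ->
    (forall a b, a \in A -> b \in B ->
       adj a b = ((a == a1) && (b == b1)) || ((a == a2) && (b == b2))) ->
    directed_ham_cycle adj pi ->
    ~~ upair a1 b1 x (pi x) -> ~~ upair a2 b2 x (pi x) ->
    ((#|T| ^ 2)%:R / 300 : R) <=
      (#|[set t : T * T * bool |
           let: (x', y', i) := t in
           [&& adj x' y', ~~ edgeH pi x' y', on_path pi y' x' x
             & admissible adj pi i x x' y'] ]|)%:R :> R.
Proof.
exists 1000^-1, (10 ^ 4)%N; split; first by rewrite invr_gt0.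
move=> eps T adj A B a1 b1 a2 b2 pi x _ eps_small n_large [adj_sym _].
move=> [AB_disj AB_cover [AB_bal A_poor A_deg B_poor B_deg]] _ _ _ _ _ _ AB_adj ham.
move=> not_a1b1 not_a2b2.
rewrite -/(admissible_switchings adj pi x) ler_pdivrMr // -natrM ler_nat mulnC.
have [xA | xA] := boolP (x \in A).
  apply: (part_switchings_card_ge eps_small n_large adj_sym AB_disj AB_cover AB_bal
            A_poor A_deg _ ham xA not_a1b1 not_a2b2).
  by move=> a b aA bB; rewrite AB_adj.
rewrite -upairC in not_a1b1; rewrite -upairC in not_a2b2.
have xB : x \in B by move: (in_setT x); rewrite -AB_cover inE (negbTE xA).
apply: (part_switchings_card_ge (A := B) (B := A) (d1 := a1) (d2 := a2)
          eps_small n_large adj_sym _ _ _ B_poor B_deg _ ham xB not_a1b1 not_a2b2).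
- by rewrite disjoint_sym.
- by rewrite setUC.
- by rewrite distrC.
- by move=> b a bB aA; rewrite adj_sym AB_adj // andbC [(a == a2) && _]andbC.
Qed.
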